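(* Let $R=\bigoplus_{i\ge0}R_i$ be a graded ring and $s,t\in R_0$ with $sR_0+tR_0=R_0$. Let $\eta\in\mathrm{GL}_n(R_{st},(R_+)_{st})$ with $e_1\eta=e_1$. Then there exist $\eta_1\in\mathrm{GL}_n(R_s,(R_+)_s)$ and $\eta_2\in\mathrm{GL}_n(R_t,(R_+)_t)$ such that $\eta=(\eta_1)_t(\eta_2)_s$ in $\mathrm{GL}_n(R_{st})$, and $e_1\eta_i=e_1$ for $i=1,2$.
   Context: Rings are commutative Noetherian with $1\ne0$ of finite Krull dimension; a graded ring is $R=\bigoplus_{i\ge0}R_i$ with non-trivial $\mathbb N$-grading and $R_+=\bigoplus_{i\ge1}R_i$. For an ideal $I\subset B$, $\mathrm{GL}_n(B,I)=\{\alpha\in\mathrm{GL}_n(B):\alpha\equiv\mathrm{Id}\bmod I\}$. $e_1=(1,0,\dots,0)$. For a matrix $\beta$ over $R_s$, $\beta_t$ denotes its image over $R_{st}$. *)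

From HB Require Import structures.
From mathcomp Require Import all_boot all_order all_algebra.
Set Implicit Arguments. Unset Strict Implicit. Unset Printing Implicit Defensive.
Import Order.TTheory GRing.Theory Num.Theory.
Local Open Scope ring_scope.

Section CommAlg.
Variable R : comNzRingType.

Definition is_ideal (I : R -> Prop) : Prop :=
  [/\ I 0, (forall x y, I x -> I y -> I (x + y)) & (forall r x, I x -> I (r * x))].

Definition is_prime_ideal (P : R -> Prop) : Prop :=
  [/\ is_ideal P, ~ P 1 & (forall x y, P (x * y) -> P x \/ P y)].

Definition noetherian : Prop :=
  forall I : nat -> R -> Prop, (forall k, is_ideal (I k)) ->
    (forall k x, I k x -> I k.+1 x) ->
    exists N, forall k x, (N <= k)%N -> I k x -> I N x.

Definition finite_krull_dim : Prop :=
  exists d : nat, forall (k : nat) (P : nat -> R -> Prop),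
    (forall i, (i <= k)%N -> is_prime_ideal (P i)) ->
    (forall i, (i < k)%N -> (forall x, P i x -> P i.+1 x) /\ exists x, P i.+1 x /\ ~ P i x) ->
    (k <= d)%N.

(* G i is the homogeneous component R_i *)
Definition is_grading (G : nat -> R -> Prop) : Prop :=
  [/\ (forall i, G i 0) /\
      (forall i x y, G i x -> G i y -> G i (x - y)),
      (forall i j x y, G i x -> G j y -> G (i + j)%N (x * y)),
      (forall x, exists (N : nat) (f : nat -> R),
          (forall i, G i (f i)) /\ x = \sum_(0 <= i < N) f i),
      (forall (N : nat) (f : nat -> R), (forall i, G i (f i)) ->
          \sum_(0 <= i < N) f i = 0 -> forall i, (i < N)%N -> f i = 0)
    &
      exists i x, [/\ (0 < i)%N, G i x & x != 0]].

Definition Rplus (G : nat -> R -> Prop) (x : R) : Prop :=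
  exists (N : nat) (f : nat -> R), (forall i, G i (f i)) /\ x = \sum_(1 <= i < N) f i.

(* ---------- Matrices over the localization R_s = R[1/s] ----------
   An n x n matrix over R_s is represented by a pair (A, k) with A over R,
   standing for the matrix s^-k A.  Two such pairs denote the same matrix
   over R_s iff they agree after multiplying by a power of s (usual
   definition of the localization). *)
Variable n : nat.
Definition lmx := ('M[R]_n * nat)%type.

Definition lmx_eq (s : R) (X Y : lmx) : Prop :=
  exists m : nat, s ^+ m *: (s ^+ Y.2 *: X.1 - s ^+ X.2 *: Y.1) = 0.

Definition lmx_mul (X Y : lmx) : lmx := (X.1 *m Y.1, (X.2 + Y.2)%N).

Definition lmx_one : lmx := (1%:M, 0%N).

Definition lmx_GL (s : R) (X : lmx) : Prop :=
  exists Y : lmx, lmx_eq s (lmx_mul X Y) lmx_one /\ lmx_eq s (lmx_mul Y X) lmx_one.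

(* X = Id mod I_s, for an ideal I of R: every entry of s^-k A - Id lies in
   I_s, i.e. s^m (A i j - delta_ij s^k) lies in I for some m *)
Definition lmx_congId (s : R) (I : R -> Prop) (X : lmx) : Prop :=
  exists m : nat, forall i j : 'I_n,
    I (s ^+ m * (X.1 i j - (i == j)%:R * s ^+ X.2)).

Definition lmx_GLI (s : R) (I : R -> Prop) (X : lmx) : Prop :=
  lmx_GL s X /\ lmx_congId s I X.

Definition lmx_e1 (s : R) (X : lmx) : Prop :=
  exists m : nat, forall i j : 'I_n, nat_of_ord i = 0%N ->
    s ^+ m * (X.1 i j - (nat_of_ord j == 0%N)%:R * s ^+ X.2) = 0.

(* the image over R_{st} of a matrix over R_s: s^-k A |-> (st)^-k (t^k A) *)
Definition lmx_loc (t : R) (X : lmx) : lmx := (t ^+ X.2 *: X.1, X.2).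

End CommAlg.

From HB Require Import structures.
From mathcomp Require Import all_boot all_order all_algebra.
From mathcomp Require Import ring zify.
From Stdlib Require Import ClassicalEpsilon.
Import GRing.Theory.
Local Open Scope ring_scope.
Set Implicit Arguments. Unset Strict Implicit. Unset Printing Implicit Defensive.

(* After clearing denominators, eta = S^-k B with S = st, where B has an exact
   inverse S^-k' C over R, B = S^k Id mod R_+ and the first row of B is S^k e_1
   (lmx_clear_denominators).  For l in R_0 the specialisation
   spec l : sum_i x_i |-> sum_i x_i l^i is a ring endomorphism of R fixing R_0,
   with spec 1 = id and spec 0 killing R_+, so eta(l) := S^-k spec_l(B) is
   invertible, eta(0) = Id and eta(1) = eta.  Pick u = s^N a in R_0 with
   v = 1 - u = t^N b (unit_split_pow).  Then
     eta2 := eta(u)            = Id + u (...)  is defined over R_t,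
     eta1 := eta eta(u)^-1     = Id + v (...)  is defined over R_s,
   the (...) being difference quotients (diffq) with entries in R_+ and zero
   first row, and eta = eta1 eta2.  Invertibility over R_s, resp. R_t, and not
   merely over R_st, holds once N exceeds a torsion bound provided by
   Noetherianity (noetherian_tors_bound, perturbed_id_inv). *)

Section Localization.
Variable R : comNzRingType.

Lemma mul_exp_ge (x z : R) p m : (p <= m)%N -> x ^+ p * z = 0 -> x ^+ m * z = 0.
Proof. by move=> hpm h; rewrite -(subnK hpm) exprD -mulrA h mulr0. Qed.

Definition tors_bound (x y : R) (q : nat) : Prop :=
  forall i z, (exists j, x ^+ j * (y ^+ i * z) = 0) ->
    exists j, x ^+ j * (y ^+ q * z) = 0.

(* In a Noetherian ring such a bound exists: the ideals
   {z | y^i z is x-power torsion} form an ascending chain. *)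
Lemma noetherian_tors_bound (x y : R) : noetherian R -> exists q, tors_bound x y q.
Proof.
move=> hnoeth.
pose I k z := exists j, x ^+ j * (y ^+ k * z) = 0.
have I_ideal k : is_ideal (I k).
  split.
  - by exists 0%N; rewrite !mulr0.
  - move=> a b [j1 h1] [j2 h2]; exists (j1 + j2)%N.
    have -> : x ^+ (j1 + j2) * (y ^+ k * (a + b)) = x ^+ j2 * (x ^+ j1 * (y ^+ k * a))
                 + x ^+ j1 * (x ^+ j2 * (y ^+ k * b)) by rewrite exprD; ring.
    by rewrite h1 h2 !mulr0 addr0.
  - move=> r a [j h]; exists j.
    have -> : x ^+ j * (y ^+ k * (r * a)) = r * (x ^+ j * (y ^+ k * a)) by ring.
    by rewrite h mulr0.
have I_chain k a : I k a -> I k.+1 a.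
  move=> [j h]; exists j.
  have -> : x ^+ j * (y ^+ k.+1 * a) = y * (x ^+ j * (y ^+ k * a)) by rewrite exprS; ring.
  by rewrite h mulr0.
have [N hN] := hnoeth I I_ideal I_chain.
exists N => i z hz; case: (leqP N i) => hi; first exact: hN hi hz.
have [j h] := hz; exists j.
have -> : x ^+ j * (y ^+ N * z) = y ^+ (N - i) * (x ^+ j * (y ^+ i * z)).
  by rewrite -(subnKC (ltnW hi)) exprD addKn; ring.
by rewrite h mulr0.
Qed.

Lemma finite_uniform_bound (T : finType) (Q : T -> nat -> Prop) :
  (forall a j j', (j <= j')%N -> Q a j -> Q a j') -> (forall a, exists j, Q a j) ->
  exists j, forall a, Q a j.
Proof.
move=> Qmono Qex.
suff [j hj] : exists j, forall a, a \in enum T -> Q a j.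
  by exists j => a; apply: hj; rewrite mem_enum.
elim: (enum T) => [|b r [j ih]]; first by exists 0%N.
have [jb hb] := Qex b.
exists (j + jb)%N => a; rewrite inE => /orP [/eqP ->|ha].
  by apply: Qmono hb; rewrite leq_addl.
by apply: Qmono (ih a ha); rewrite leq_addr.
Qed.

Variable n : nat.

Lemma scale_exp_ge (x : R) p m (Z : 'M[R]_n) :
  (p <= m)%N -> x ^+ p *: Z = 0 -> x ^+ m *: Z = 0.
Proof. by move=> hpm h; rewrite -(subnK hpm) exprD -scalerA h scaler0. Qed.

Lemma tors_bound_kill (x y : R) q M i (W : 'M[R]_n) :
  tors_bound x y q -> (q <= M)%N ->
  y ^+ i *: (y ^+ M *: W) = 0 -> exists j, x ^+ j *: (y ^+ M *: W) = 0.
Proof.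
move=> hq hM hW.
pose Q (ab : 'I_n * 'I_n) j := x ^+ j * (y ^+ q * W ab.1 ab.2) = 0.
have Qmono ab j1 j2 : (j1 <= j2)%N -> Q ab j1 -> Q ab j2 by apply: mul_exp_ge.
have Qex ab : exists j, Q ab j.
  apply: (hq (i + M)%N); exists 0%N.
  by have := congr1 (fun Z : 'M_n => Z ab.1 ab.2) hW; rewrite !mxE mulrA -exprD mul1r.
have [j hj] := finite_uniform_bound Qmono Qex.
exists j; apply/matrixP => a b; rewrite !mxE.
have -> : x ^+ j * (y ^+ M * W a b) = y ^+ (M - q) * (x ^+ j * (y ^+ q * W a b)).
  by rewrite -{1}(subnKC hM) exprD; ring.
by rewrite (hj (a, b)) mulr0.
Qed.

Lemma scale_mulmx (c d : R) (X Y : 'M[R]_n) : (c *: X) *m (d *: Y) = (c * d) *: (X *m Y).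
Proof. by rewrite -scalemxAl -scalemxAr scalerA. Qed.

(* The matrix y^-a (y^a I + x^M U) = I + (x^M / y^a) U over R_y. *)
Definition perturbed_id (x y : R) (a M : nat) (U : 'M[R]_n) : lmx R n :=
  (y ^+ a *: 1%:M + x ^+ M *: U, a).

Lemma perturbed_id_mulE (x y : R) a b M (U V : 'M[R]_n) :
  (perturbed_id x y a M U).1 *m (perturbed_id x y b M V).1 - y ^+ (a + b) *: 1%:M
  = x ^+ M *: (y ^+ a *: V + y ^+ b *: U + x ^+ M *: (U *m V)).
Proof.
rewrite /= mulmxDl !mulmxDr -!scalemxAl -!scalemxAr !mul1mx !mulmx1.
by apply/matrixP => i j; rewrite !mxE !exprD; ring.
Qed.

Lemma perturbed_id_inv (x y : R) q a b M (U V : 'M[R]_n) :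
  tors_bound y x q -> (q <= M)%N ->
  x ^+ (a + b) *: ((perturbed_id x y a M U).1 *m (perturbed_id x y b M V).1)
    = (y * x) ^+ (a + b) *: 1%:M ->
  lmx_eq y (lmx_mul (perturbed_id x y a M U) (perturbed_id x y b M V)) (lmx_one R n).
Proof.
move=> hq hM /= hprod; have /= hE := perturbed_id_mulE x y a b M U V.
rewrite /lmx_eq /lmx_mul /lmx_one /= expr0 scale1r hE.
apply: (tors_bound_kill (i := (a + b)%N)) hq hM _.
by rewrite -hE scalerBr hprod scalerA -exprMn mulrC subrr.
Qed.

Lemma perturbed_id_GL (x y : R) q a b M (U V : 'M[R]_n) :
  tors_bound y x q -> (q <= M)%N ->
  x ^+ (a + b) *: ((perturbed_id x y a M U).1 *m (perturbed_id x y b M V).1)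
    = (y * x) ^+ (a + b) *: 1%:M ->
  x ^+ (b + a) *: ((perturbed_id x y b M V).1 *m (perturbed_id x y a M U).1)
    = (y * x) ^+ (b + a) *: 1%:M ->
  lmx_GL y (perturbed_id x y a M U).
Proof.
by move=> hq hM h1 h2; exists (perturbed_id x y b M V); split; apply: perturbed_id_inv hM _.
Qed.

Lemma perturbed_id_congId (I : R -> Prop) (x y : R) a M (U : 'M[R]_n) :
  (forall r z, I z -> I (r * z)) -> (forall i j, I (U i j)) ->
  lmx_congId y I (perturbed_id x y a M U).
Proof.
move=> hI hU; exists 0%N => i j /=; rewrite !mxE expr0 mul1r.
by rewrite [_ * y ^+ a]mulrC addrAC subrr add0r; apply: hI.
Qed.

Lemma perturbed_id_e1 (x y : R) a M (U : 'M[R]_n) :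
  (forall i j : 'I_n, nat_of_ord i = 0%N -> U i j = 0) ->
  lmx_e1 y (perturbed_id x y a M U).
Proof.
move=> hU; exists 0%N => i j hi /=; rewrite !mxE expr0 mul1r.
have -> : (i == j) = (nat_of_ord j == 0%N) by rewrite -val_eqE /= hi eq_sym.
by rewrite hU // mulr0 [_ * y ^+ a]mulrC addr0 subrr.
Qed.

Lemma lmx_eq_trans (s : R) (X Y Z : lmx R n) :
  lmx_eq s X Y -> lmx_eq s Y Z -> lmx_eq s X Z.
Proof.
move=> [m1 h1] [m2 h2]; exists (m1 + m2 + Y.2)%N.
apply/matrixP => i j; have := congr1 (fun A : 'M_n => A i j) h1.
have := congr1 (fun A : 'M_n => A i j) h2; rewrite !mxE => e2 e1.
have -> : s ^+ (m1 + m2 + Y.2) * (s ^+ Z.2 * X.1 i j - s ^+ X.2 * Z.1 i j)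
  = s ^+ m2 * s ^+ Z.2 * (s ^+ m1 * (s ^+ Y.2 * X.1 i j - s ^+ X.2 * Y.1 i j))
    + s ^+ m1 * s ^+ X.2 * (s ^+ m2 * (s ^+ Z.2 * Y.1 i j - s ^+ Y.2 * Z.1 i j)).
  by rewrite !exprD; ring.
by rewrite e1 e2 !mulr0 addr0.
Qed.

Lemma lmx_clear_denominators (S : R) (I : R -> Prop) (eta : lmx R n) :
  (forall r z, I z -> I (r * z)) -> lmx_GLI S I eta -> lmx_e1 S eta ->
  exists (B C : 'M[R]_n) (k k' : nat),
  [/\ B *m C = S ^+ (k + k') *: 1%:M, C *m B = S ^+ (k + k') *: 1%:M,
      forall i j, I (B i j - (i == j)%:R * S ^+ k),
      forall i j : 'I_n, nat_of_ord i = 0%N -> B i j = (nat_of_ord j == 0%N)%:R * S ^+ k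
    & lmx_eq S eta (B, k)].
Proof.
case: eta => B k hI [[[C k'] [[m1 h1] [m2 h2]]] [m3 h3]] [m4 h4] /=.
rewrite /= expr0 !scale1r in h1 h2 h3 h4.
set m := (m1 + m2 + m3 + m4)%N.
have inv_exact (X : 'M[R]_n) p e : (p <= m)%N -> S ^+ p *: (X - S ^+ e *: 1%:M) = 0 ->
    (S ^+ m *: X) = S ^+ (m + e) *: 1%:M.
  move=> hpm /(scale_exp_ge hpm) /eqP; rewrite scalerBr subr_eq0 scalerA -exprD => /eqP.
  by rewrite addnC.
have hm1 : (m1 <= m)%N by rewrite /m; lia.
have hm2 : (m2 <= m)%N by rewrite /m; lia.
have h1' := inv_exact _ _ _ hm1 h1.
have h2' := inv_exact _ _ _ hm2 h2.
exists (S ^+ m *: B), (S ^+ m *: C), (k + m)%N, (k' + m)%N; split.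
- rewrite -scalemxAl -scalemxAr h1' scalerA -exprD; congr (_ *: _); congr (_ ^+ _); lia.
- rewrite -scalemxAl -scalemxAr addnC h2' scalerA -exprD; congr (_ *: _); congr (_ ^+ _); lia.
- move=> i j; rewrite mxE.
  have -> : S ^+ m * B i j - (i == j)%:R * S ^+ (k + m)
          = S ^+ (m - m3) * (S ^+ m3 * (B i j - (i == j)%:R * S ^+ k)).
    by rewrite mulrA -exprD subnK ?exprD; [ring | rewrite /m; lia].
  exact: hI.
- move=> i j hi; rewrite mxE; apply/eqP; rewrite -subr_eq0; apply/eqP.
  have -> : S ^+ m * B i j - (nat_of_ord j == 0%N)%:R * S ^+ (k + m)
          = S ^+ (m - m4) * (S ^+ m4 * (B i j - (nat_of_ord j == 0%N)%:R * S ^+ k)).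
    by rewrite mulrA -exprD subnK ?exprD; [ring | rewrite /m; lia].
  by rewrite h4 // mulr0.
- by exists 0%N; rewrite /= scalerA -exprD addnC subrr scaler0.
Qed.

End Localization.

Section GradedRing.
Variables (R : comNzRingType) (G : nat -> R -> Prop).
Hypothesis hG : is_grading G.

Lemma grade0 i : G i 0. Proof. by case: hG => -[]. Qed.

Lemma gradeB i x y : G i x -> G i y -> G i (x - y).
Proof. by case: hG => -[_ hB] _ _ _ _; apply: hB. Qed.

Lemma gradeD i x y : G i x -> G i y -> G i (x + y).
Proof.
move=> hx hy; rewrite -[y]opprK -[- y]sub0r.
by apply: gradeB => //; apply: gradeB => //; apply: grade0.
Qed.

Lemma gradeM i j x y : G i x -> G j y -> G (i + j)%N (x * y).
Proof. by case: hG => _ hM _ _ _; apply: hM. Qed.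

Lemma grade_sum i (I : Type) (r : seq I) (P : pred I) (F : I -> R) :
  (forall k, P k -> G i (F k)) -> G i (\sum_(k <- r | P k) F k).
Proof. by move=> hF; elim/big_ind: _ => //; [apply: grade0 | apply: gradeD]. Qed.

(* A polynomial is homogeneous-coefficient when its i-th coefficient lies in R_i;
   such polynomials encode the decomposition x = sum_i x_i via evaluation at 1. *)
Definition homog (p : {poly R}) : Prop := forall i, G i p`_i.

(* Directness of the grading: a homogeneous decomposition is determined by its sum. *)
Lemma homog_inj (p q : {poly R}) : homog p -> homog q -> p.[1] = q.[1] -> p = q.
Proof.
move=> hp hq e; apply/eqP; rewrite -subr_eq0; apply/eqP.
set d := p - q.
have hd : homog d by move=> i; rewrite coefB; apply: gradeB.
have sum_d : \sum_(0 <= i < size d) d`_i = 0.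
  have d1 : d.[1] = 0 by rewrite hornerD hornerN e subrr.
  rewrite big_mkord -[RHS]d1 horner_coef.
  by apply: eq_bigr => j _; rewrite expr1n mulr1.
case: hG => _ _ _ hdirect _.
apply/polyP => i; rewrite coef0.
case: (ltnP i (size d)) => hi; first exact: hdirect hd sum_d i hi.
by rewrite nth_default.
Qed.

Lemma homog_exists x : exists p : {poly R}, homog p /\ p.[1] = x.
Proof.
case: hG => _ _ hcover _ _.
have [N [f [hf ->]]] := hcover x.
exists (\poly_(i < N) f i); split.
  by move=> i; rewrite coef_poly; case: ifP => _; [apply: hf | apply: grade0].
by rewrite horner_poly big_mkord; apply: eq_bigr => i _; rewrite expr1n mulr1.
Qed.

Definition hdec (x : R) : {poly R} :=
  proj1_sig (constructive_indefinite_description _ (homog_exists x)).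

Lemma hdec_homog x : homog (hdec x).
Proof. by rewrite /hdec; case: constructive_indefinite_description => p []. Qed.

Lemma hdec1 x : (hdec x).[1] = x.
Proof. by rewrite /hdec; case: constructive_indefinite_description => p []. Qed.

Lemma hdecE x p : homog p -> p.[1] = x -> hdec x = p.
Proof. by move=> hp e; apply: homog_inj => //; [apply: hdec_homog | rewrite hdec1]. Qed.

(* Uniqueness makes hdec a ring morphism R -> R[X]. *)
Lemma hdecB x y : hdec (x - y) = hdec x - hdec y.
Proof.
apply: hdecE; last by rewrite hornerD hornerN !hdec1.
by move=> i; rewrite coefB; apply: gradeB; apply: hdec_homog.
Qed.

Lemma hdecM x y : hdec (x * y) = hdec x * hdec y.
Proof.
apply: hdecE; last by rewrite hornerM !hdec1.
move=> i; rewrite coefM; apply: grade_sum => -[j hj] _ /=.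
by have := gradeM (@hdec_homog x j) (@hdec_homog y (i - j)%N); rewrite subnKC // -ltnS.
Qed.

Lemma hdec_homogeneous i x : G i x -> hdec x = x *: 'X^i.
Proof.
move=> hx; apply: hdecE; last by rewrite hornerZ hornerXn expr1n mulr1.
move=> j; rewrite coefZ coefXn; case: eqP => [->|_]; first by rewrite mulr1.
by rewrite mulr0; apply: grade0.
Qed.

(* The unit is homogeneous of degree 0: the decomposition e of 1 is idempotent
   under multiplication, which forces its positive-degree parts to vanish. *)
Lemma grade0_1 : G 0%N 1.
Proof.
set e := hdec 1.
have he j : G j e`_j by apply: hdec_homog.
have e_unit x : hdec x = hdec x * e by rewrite -hdecM mulr1.
have e0ej j : (0 < j)%N -> e`_0 * e`_j = 0.
  move=> j_gt0; have := congr1 (fun p : {poly R} => p`_j) (e_unit e`_0).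
  rewrite /= (hdec_homogeneous (he 0%N)) coefZ coefXn -scalerAl coefZ mul1r.
  by case: j j_gt0 => // j _; rewrite mulr0 => <-.
have eje0 j : e`_j * e`_0 = e`_j.
  have := congr1 (fun p : {poly R} => p`_j) (e_unit e`_j).
  rewrite /= (hdec_homogeneous (he j)) coefZ coefXn eqxx mulr1 -scalerAl coefZ.
  by rewrite coefXnM ltnn subnn => <-.
have e_const : e = (e`_0)%:P.
  apply/polyP => -[|j]; rewrite coefC //=.
  by rewrite -eje0 mulrC e0ej.
by have := hdec1 1; rewrite -/e e_const hornerC => <-.
Qed.

Lemma hdec_grade0 x : G 0%N x -> hdec x = x%:P.
Proof. by move=> hx; rewrite (hdec_homogeneous hx) expr0 alg_polyC. Qed.

Lemma grade0X x k : G 0%N x -> G 0%N (x ^+ k).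
Proof.
by move=> hx; elim: k => [|k ih]; [apply: grade0_1 | rewrite exprS; apply: gradeM hx ih].
Qed.

Lemma grade0_nat (b : bool) : G 0%N (b%:R : R).
Proof. by case: b; [apply: grade0_1 | apply: grade0]. Qed.

Lemma hdec1_poly : hdec 1 = 1. Proof. by rewrite (hdec_grade0 grade0_1). Qed.

HB.instance Definition _ := GRing.isZmodMorphism.Build R {poly R} hdec hdecB.
HB.instance Definition _ :=
  GRing.isMonoidMorphism.Build R {poly R} hdec (hdec1_poly, hdecM).

(* Specialisation x |-> sum_i x_i l^i: a ring endomorphism of R for every l,
   fixing R_0; it interpolates between x (at l = 1) and x_0 (at l = 0). *)
Definition spec (l : R) : {rmorphism R -> R} := horner_eval l \o hdec.

Lemma specE l x : spec l x = (hdec x).[l]. Proof. by []. Qed.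

Lemma spec_grade0 l x : G 0%N x -> spec l x = x.
Proof. by move=> hx; rewrite specE hdec_grade0 // hornerC. Qed.

Lemma spec1 x : spec 1 x = x. Proof. exact: hdec1. Qed.

Lemma RplusP x : Rplus G x <-> (hdec x)`_0 = 0.
Proof.
split.
  move=> [N [f [hf ->]]].
  set q := \poly_(i < N) (if i == 0%N then 0 else f i).
  suff -> : hdec (\sum_(1 <= i < N) f i) = q by rewrite /q coef_poly; case: ifP.
  apply: hdecE.
    move=> i; rewrite coef_poly; case: ifP => _; last exact: grade0.
    by case: ifP => _; [apply: grade0 | apply: hf].
  rewrite horner_poly; case: N {q} => [|N]; first by rewrite big_ord0 big_geq.
  rewrite big_ord_recl /= mul0r add0r big_add1 /= big_mkord.
  by apply: eq_bigr => i _; rewrite expr1n mulr1.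
move=> h0; exists (size (hdec x)), (fun i => (hdec x)`_i); split; first exact: hdec_homog.
rewrite -{1}(hdec1 x) horner_coef.
case: (size (hdec x)) => [|N]; first by rewrite big_ord0 big_geq.
rewrite big_ord_recl /= h0 mul0r add0r big_add1 /= big_mkord.
by apply: eq_bigr => i _; rewrite expr1n mulr1.
Qed.

Lemma RplusD x y : Rplus G x -> Rplus G y -> Rplus G (x + y).
Proof. by move=> /RplusP hx /RplusP hy; apply/RplusP; rewrite raddfD coefD hx hy addr0. Qed.

Lemma RplusMl r x : Rplus G x -> Rplus G (r * x).
Proof. by move=> /RplusP hx; apply/RplusP; rewrite rmorphM coef0M hx mulr0. Qed.

Lemma Rplus_sum (I : Type) (r : seq I) (P : pred I) (F : I -> R) :
  (forall k, P k -> Rplus G (F k)) -> Rplus G (\sum_(k <- r | P k) F k).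
Proof.
move=> hF; elim/big_ind: _ => //; last exact: RplusD.
by apply/RplusP; rewrite raddf0 coef0.
Qed.

Lemma spec0_Rplus x : Rplus G x -> spec 0 x = 0.
Proof. by move=> /RplusP h0; rewrite specE horner_coef0. Qed.

(* Difference quotient (spec b x - spec a x) / (b - a), computed coefficientwise
   from (b^i - a^i) / (b - a) = sum_(j < i) b^(i-1-j) a^j. *)
Definition diffq (a b x : R) : R :=
  \sum_(i < size (hdec x))
     (\sum_(j < i) b ^+ (i.-1 - j) * a ^+ j) * (hdec x)`_i.

Lemma diffqP a b x : spec b x - spec a x = (b - a) * diffq a b x.
Proof.
rewrite !specE !horner_coef -sumrB /diffq mulr_sumr; apply: eq_bigr => i _.
by rewrite -mulrBr subrXX mulrA [_ * (hdec x)`_i]mulrC mulrA.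
Qed.

(* For a, b in R_0 the degree-0 term of the quotient is empty, so it lies in R_+. *)
Lemma diffq_Rplus a b x : G 0%N a -> G 0%N b -> Rplus G (diffq a b x).
Proof.
move=> ha hb; apply/RplusP.
set c := fun i : nat => \sum_(j < i) b ^+ (i.-1 - j) * a ^+ j.
have hc i : G 0%N (c i).
  by apply: grade_sum => j _; apply: gradeM (grade0X _ hb) (grade0X _ ha).
suff -> : hdec (diffq a b x) = \poly_(i < size (hdec x)) (c i * (hdec x)`_i).
  by rewrite coef_poly; case: ifP => // _; rewrite /c big_ord0 mul0r.
apply: hdecE; last by rewrite horner_poly; apply: eq_bigr => i _; rewrite expr1n mulr1.
move=> i; rewrite coef_poly; case: ifP => _; last exact: grade0.
exact: gradeM (hc i) (@hdec_homog x i).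
Qed.

(* An element of R_0 is constant in l, so its difference quotient vanishes. *)
Lemma diffq_grade0 a b x : G 0%N x -> diffq a b x = 0.
Proof.
move=> hx; rewrite /diffq hdec_grade0 //; apply: big1 => -[[|i] hi] _ /=.
  by rewrite big_ord0 mul0r.
by rewrite coefC mulr0.
Qed.

Lemma unit_split_pow (s t a b : R) N : G 0%N s -> G 0%N t -> G 0%N a -> G 0%N b ->
  s * a + t * b = 1 ->
  exists a' b', [/\ G 0%N a', G 0%N b' & s ^+ N * a' + t ^+ N * b' = 1].
Proof.
have geom (x y : R) : x + y = 1 -> x ^+ N + y * \sum_(i < N) x ^+ i = 1.
  move=> exy; have -> : y = 1 - x by rewrite -exy addrC addKr.
  by rewrite -opprB mulNr -subrX1 opprB addrC subrK.
have sum_grade0 (x : R) : G 0%N x -> G 0%N (\sum_(i < N) x ^+ i).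
  by move=> hx; apply: grade_sum => i _; apply: grade0X.
move=> hs ht ha hb e.
have e1 := geom _ _ e; set d := \sum_(i < N) _ in e1.
have hd : G 0%N d by apply: sum_grade0; apply: gradeM hs ha.
have e2 := geom _ _ (etrans (addrC _ _) e1); set d2 := \sum_(i < N) _ in e2.
have hd2 : G 0%N d2 by apply: sum_grade0; apply: gradeM (gradeM ht hb) hd.
exists (a ^+ N * d2), ((b * d) ^+ N); split.
- exact: gradeM (grade0X _ ha) hd2.
- exact: grade0X (gradeM hb hd).
by rewrite -e2 addrC !exprMn !mulrA.
Qed.

End GradedRing.

Section Patching.
Variables (R : comNzRingType) (G : nat -> R -> Prop).
Hypothesis hG : is_grading G.
Variables (s t : R) (n k k' : nat) (B C : 'M[R]_n).
Hypotheses (hs : G 0%N s) (ht : G 0%N t).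
Local Notation S := (s * t).
Local Notation K := (k + k')%N.
Hypotheses (hBC : B *m C = S ^+ K *: 1%:M) (hCB : C *m B = S ^+ K *: 1%:M).
Hypothesis hBplus : forall i j, Rplus G (B i j - (i == j)%:R * S ^+ k).
Hypothesis hBrow : forall i j : 'I_n, nat_of_ord i = 0%N ->
  B i j = (nat_of_ord j == 0%N)%:R * S ^+ k.
Variables (M q1 q2 : nat) (a b : R).
Hypotheses (hq1 : tors_bound s t q1) (hq2 : tors_bound t s q2).
Hypotheses (hq1M : (q1 <= M)%N) (hq2M : (q2 <= M)%N).
Local Notation N := (M + K + k)%N.
Hypotheses (ha : G 0%N a) (hab : s ^+ N * a + t ^+ N * b = 1).

(* The homotopy parameter u = s^N a and its complement v = 1 - u = t^N b. *)
Local Notation u := (s ^+ N * a).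
Local Notation v := (t ^+ N * b).

Let hS : G 0%N S. Proof. exact: (gradeM hG hs ht). Qed.
Let hu : G 0%N u. Proof. exact: (gradeM hG (grade0X hG _ hs) ha). Qed.
Let hv : v = 1 - u. Proof. by rewrite -hab addrC addKr. Qed.

(* eta(l) = S^-k spec_l(B), the specialisation of eta at l. *)
Local Notation Bl l := (map_mx (spec hG l) B).
Local Notation Cl l := (map_mx (spec hG l) C).

Lemma spec_mx_diff (X : 'M[R]_n) (l l' : R) :
  map_mx (spec hG l') X = map_mx (spec hG l) X + (l' - l) *: map_mx (diffq hG l l') X.
Proof. by apply/matrixP => i j; rewrite !mxE -diffqP addrC subrK. Qed.

Lemma spec_scalar_mx l e :
  map_mx (spec hG l) (S ^+ e *: 1%:M : 'M[R]_n) = S ^+ e *: 1%:M.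
Proof. by rewrite map_mxZ map_mx1 spec_grade0 //; apply: (grade0X hG _ hS). Qed.

Lemma specBC l : Bl l *m Cl l = S ^+ K *: 1%:M.
Proof. by rewrite -map_mxM hBC spec_scalar_mx. Qed.

Lemma specCB l : Cl l *m Bl l = S ^+ K *: 1%:M.
Proof. by rewrite -map_mxM hCB spec_scalar_mx. Qed.

(* At l = 0 eta specialises to the identity, since B = S^k Id mod R_+. *)
Lemma specB0 : Bl 0 = S ^+ k *: 1%:M.
Proof.
apply/matrixP => i j; rewrite !mxE.
have hdelta : G 0%N ((i == j)%:R * S ^+ k).
  exact: (gradeM hG (grade0_nat hG _) (grade0X hG _ hS)).
rewrite -(subrK ((i == j)%:R * S ^+ k) (B i j)) rmorphD spec0_Rplus // add0r.
by rewrite spec_grade0 // mulrC.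
Qed.

Lemma specC0 : S ^+ k *: Cl 0 = S ^+ K *: 1%:M.
Proof. by rewrite -(specCB 0) specB0 -scalemxAr mulmx1. Qed.

Local Notation Xu := (map_mx (diffq hG 0 u) B).
Local Notation Xc := (map_mx (diffq hG 0 u) C).
Local Notation Xv := (map_mx (diffq hG u 1) B).

(* The two factors and their inverses, as perturbed identities:
     eta2    = eta(u)          = I + s^M W2 / t^k       over R_t,
     eta2inv = eta(u)^-1       = I + s^M W2inv / t^K    over R_t,
     eta1    = eta eta(u)^-1   = I + t^M W1 / s^K       over R_s,
     eta1inv = eta(u) eta^-1   = I + t^M W1inv / s^K    over R_s. *)
Definition W2 : 'M[R]_n := (s ^+ K * a) *: Xu.
Definition W2inv : 'M[R]_n := (s ^+ (k + k) * t ^+ k * a) *: Xc.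
Definition W1 : 'M[R]_n := (t ^+ k * b) *: (Xv *m Cl u).
Definition W1inv : 'M[R]_n := (- (t ^+ k * b)) *: (Xv *m C).

Definition eta2 : lmx R n := perturbed_id s t k M W2.
Definition eta2inv : lmx R n := perturbed_id s t K M W2inv.
Definition eta1 : lmx R n := perturbed_id t s K M W1.
Definition eta1inv : lmx R n := perturbed_id t s K M W1inv.

Lemma eta2_loc : s ^+ k *: eta2.1 = Bl u.
Proof.
rewrite /eta2 /W2 /perturbed_id /=.
rewrite (spec_mx_diff B 0 u) specB0 subr0.
by apply/matrixP => i j; rewrite !mxE !exprD !exprMn; ring.
Qed.

Lemma eta2inv_loc : s ^+ K *: eta2inv.1 = S ^+ k *: Cl u.
Proof.
rewrite /eta2inv /W2inv /perturbed_id /=.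
rewrite (spec_mx_diff C 0 u) [in RHS]scalerDr specC0 subr0.
by apply/matrixP => i j; rewrite !mxE !exprD !exprMn; ring.
Qed.

Lemma spec1_mx (X : 'M[R]_n) : map_mx (spec hG 1) X = X.
Proof. by apply/matrixP => i j; rewrite mxE spec1. Qed.

Lemma B_expand : B = Bl u + v *: Xv.
Proof. by rewrite hv -{1}(spec1_mx B) (spec_mx_diff B u 1). Qed.

Lemma eta1_loc : t ^+ K *: eta1.1 = B *m Cl u.
Proof.
rewrite /eta1 /W1 /perturbed_id /=.
rewrite [in RHS]B_expand mulmxDl specBC -scalemxAl.
move: (Xv *m Cl u) => X.
by apply/matrixP => i j; rewrite !mxE !exprD !exprMn; ring.
Qed.

Lemma eta1inv_loc : t ^+ K *: eta1inv.1 = Bl u *m C.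
Proof.
rewrite /eta1inv /W1inv /perturbed_id /=.
rewrite (_ : Bl u = B - v *: Xv); last by rewrite {2}B_expand addrK.
rewrite mulmxBl hBC -scalemxAl.
move: (Xv *m C) => X.
by apply/matrixP => i j; rewrite !mxE !exprD !exprMn; ring.
Qed.

Lemma eta_factor : lmx_eq S (B, k) (lmx_mul (lmx_loc t eta1) (lmx_loc s eta2)).
Proof.
exists 0%N; rewrite /lmx_loc /lmx_mul /= eta1_loc eta2_loc -mulmxA specCB.
by rewrite -scalemxAr mulmx1 scalerA -exprD addnC subrr scaler0.
Qed.

Lemma eta2_GL : lmx_GL t eta2.
Proof.
apply: (perturbed_id_GL (b := K) (V := W2inv) hq2 hq2M); rewrite -/eta2 -/eta2inv.
- rewrite exprD -scale_mulmx eta2_loc eta2inv_loc -scalemxAr specBC scalerA.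
  by rewrite -exprD [t * s]mulrC.
- rewrite exprD -scale_mulmx eta2_loc eta2inv_loc -scalemxAl specCB scalerA.
  by rewrite -exprD [t * s]mulrC addnC.
Qed.

Lemma eta1_GL : lmx_GL s eta1.
Proof.
apply: (perturbed_id_GL (b := K) (V := W1inv) hq1 hq1M); rewrite -/eta1 -/eta1inv.
- rewrite exprD -scale_mulmx eta1_loc eta1inv_loc mulmxA -(mulmxA B) specCB.
  by rewrite -scalemxAr mulmx1 -scalemxAl hBC scalerA -exprD.
- rewrite exprD -scale_mulmx eta1_loc eta1inv_loc mulmxA -(mulmxA _ C) hCB.
  by rewrite -scalemxAr mulmx1 -scalemxAl specBC scalerA -exprD.
Qed.

Lemma eta1_congId : lmx_congId s (Rplus G) eta1.
Proof.
apply: perturbed_id_congId (RplusMl hG) _ => i j; rewrite mxE; apply: (RplusMl hG).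
rewrite mxE; apply: (Rplus_sum hG) => l _; rewrite mulrC; apply: (RplusMl hG).
by rewrite mxE; apply: (diffq_Rplus hG _ hu (grade0_1 hG)).
Qed.

Lemma eta2_congId : lmx_congId t (Rplus G) eta2.
Proof.
apply: perturbed_id_congId (RplusMl hG) _ => i j; rewrite mxE; apply: (RplusMl hG).
by rewrite mxE; apply: (diffq_Rplus hG _ (grade0 hG 0%N) hu).
Qed.

(* ... and vanishing first row, because the first row of B is homogeneous of degree 0. *)
Lemma diffq_row (l l' : R) i j : nat_of_ord i = 0%N -> map_mx (diffq hG l l') B i j = 0.
Proof.
move=> hi; rewrite mxE hBrow // diffq_grade0 //.
exact: (gradeM hG (grade0_nat hG _) (grade0X hG _ hS)).
Qed.

Lemma eta1_e1 : lmx_e1 s eta1.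
Proof.
apply: perturbed_id_e1 => i j hi; rewrite mxE [X in _ * X]mxE big1 ?mulr0 // => l _.
by rewrite diffq_row ?mul0r.
Qed.

Lemma eta2_e1 : lmx_e1 t eta2.
Proof. by apply: perturbed_id_e1 => i j hi; rewrite mxE diffq_row ?mulr0. Qed.

Theorem graded_patching :
  exists eta1 eta2 : lmx R n,
    [/\ lmx_GLI s (Rplus G) eta1, lmx_GLI t (Rplus G) eta2,
        lmx_eq S (B, k) (lmx_mul (lmx_loc t eta1) (lmx_loc s eta2)),
        lmx_e1 s eta1 & lmx_e1 t eta2].
Proof.
exists eta1, eta2; split; [split | split | | |].
- exact: eta1_GL.
- exact: eta1_congId.
- exact: eta2_GL.
- exact: eta2_congId.
- exact: eta_factor.
- exact: eta1_e1.
- exact: eta2_e1.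
Qed.

End Patching.

Theorem mainTheorem5 (R : comNzRingType) (G : nat -> R -> Prop)
  (hNoeth : noetherian R) (hdim : finite_krull_dim R)
  (hG : is_grading G) (s t : R) (hs : G 0%N s) (ht : G 0%N t)
  (hst : forall x, G 0%N x <->
           exists a b, [/\ G 0%N a, G 0%N b & x = s * a + t * b])
  (n : nat) (eta : lmx R n)
  (heta : lmx_GLI (s * t) (Rplus G) eta)
  (he1 : lmx_e1 (s * t) eta) :
  exists eta1 eta2 : lmx R n,
    [/\ lmx_GLI s (Rplus G) eta1, lmx_GLI t (Rplus G) eta2,
        lmx_eq (s * t) eta (lmx_mul (lmx_loc t eta1) (lmx_loc s eta2)),
        lmx_e1 s eta1 & lmx_e1 t eta2].
Proof.
have [B [C [k [k' [hBC hCB hBplus hBrow eta_B]]]]] :=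
  lmx_clear_denominators (RplusMl hG) heta he1.
have [q1 hq1] := noetherian_tors_bound s t hNoeth.
have [q2 hq2] := noetherian_tors_bound t s hNoeth.
have [a [b [ha hb /esym hab]]] := (hst 1).1 (grade0_1 hG).
have [a' [b' [ha' _ hab']]] :=
  unit_split_pow hG (q1 + q2 + (k + k') + k) hs ht ha hb hab.
have [eta1 [eta2 [h1 h2 factor he1' he2']]] :=
  graded_patching hG hs ht hBC hCB hBplus hBrow hq1 hq2 (leq_addr q2 q1) (leq_addl q1 q2)
    ha' hab'.
exists eta1, eta2; split => //.
exact: lmx_eq_trans eta_B factor.
Qed.
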